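(* Let $R$ be an associative ring with identity, $M$ a left $R$-module and $P\leq M$ a submodule. If $\eta^M_P$ is a prime preradical and $\eta^M_P(M)\neq M$, then $\eta^M_P(M)\in Spec(\Lambda^{fi}(M))$. Moreover, $\eta^M_P(M)$ is the largest element of $Spec(\Lambda^{fi}(M))$ contained in $P$.
   Context: A preradical $r$ on $R$-Mod is a subfunctor of the identity functor: it assigns to each module $X$ a submodule $r(X)$ with $f(r(X))\subseteq r(Y)$ for every homomorphism $f\colon X\to Y$. Preradicals are ordered by $r\preceq s$ iff $r(X)\subseteq s(X)$ for all $X$; the product is $(r\cdot s)(X)=r(s(X))$; $\underline{1}$ is the identity functor. A preradical $r$ is prime if $r\neq\underline{1}$ and whenever $s\cdot t\preceq r$ for preradicals $s,t$, then $s\preceq r$ or $t\preceq r$. For $P\leq M$, $\eta^M_P(L)=\bigcap\{f^{-1}(P)\mid f\in\mathrm{Hom}_R(L,M)\}$ for each module $L$. $\Lambda^{fi}(M)$ is the set of fully invariant submodules of $M$. For $N,L\leq M$, $N_ML=\sum\{f(N)\mid f\in\mathrm{Hom}_R(M,L)\}$. $Spec(\Lambda^{fi}(M))$ is the set of $Q\in\Lambda^{fi}(M)$ with $Q\neq M$ such that for all $N,L\in\Lambda^{fi}(M)$, $N_ML\subseteq Q$ implies $N\subseteq Q$ or $L\subseteq Q$. *)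

From HB Require Import structures.
From mathcomp Require Import all_boot all_algebra.
From mathcomp Require Import boolp.
Unset Printing Implicit Defensive.
Import GRing.Theory.
Local Open Scope ring_scope.

Definition subset_of (X : Type) := X -> Prop.

Definition incl {X : Type} (A B : subset_of X) := forall x, A x -> B x.

Definition is_submod {R : pzRingType} {X : lmodType R} (S : subset_of X) :=
  [/\ S 0, (forall x y, S x -> S y -> S (x + y)) & (forall (a : R) x, S x -> S (a *: x))].

Section SubModule.
Variables (R : pzRingType) (X : lmodType R) (S : subset_of X) (HS : is_submod S).

Definition submod_car := {x : X | S x}.
HB.instance Definition _ := gen_eqMixin submod_car.
HB.instance Definition _ := gen_choiceMixin submod_car.

Let S0 : S 0. Proof. by case: HS. Qed.
Let SD {x y} : S x -> S y -> S (x + y). Proof. by case: HS => _ H _; apply: H. Qed.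
Let SZ (a : R) {x} : S x -> S (a *: x). Proof. by case: HS => _ _ H; apply: H. Qed.
Let SN {x} : S x -> S (- x). Proof. by move=> Sx; rewrite -scaleN1r; apply: SZ. Qed.

Definition sm_zero : submod_car := exist _ 0 S0.
Definition sm_add (u v : submod_car) : submod_car :=
  exist _ (proj1_sig u + proj1_sig v) (SD (proj2_sig u) (proj2_sig v)).
Definition sm_opp (u : submod_car) : submod_car :=
  exist _ (- proj1_sig u) (SN (proj2_sig u)).
Definition sm_scale (a : R) (u : submod_car) : submod_car :=
  exist _ (a *: proj1_sig u) (SZ a (proj2_sig u)).

Let sm_eq (u v : submod_car) : proj1_sig u = proj1_sig v -> u = v.
Proof.
case: u v => [u Su] [v Sv] /= E; subst v.
by rewrite (Prop_irrelevance Su Sv).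
Qed.

Let sm_addA : associative sm_add.
Proof. by move=> u v w; apply: sm_eq; rewrite /= addrA. Qed.
Let sm_addC : commutative sm_add.
Proof. by move=> u v; apply: sm_eq; rewrite /= addrC. Qed.
Let sm_add0 : left_id sm_zero sm_add.
Proof. by move=> u; apply: sm_eq; rewrite /= add0r. Qed.
Let sm_addN : left_inverse sm_zero sm_opp sm_add.
Proof. by move=> u; apply: sm_eq; rewrite /= addNr. Qed.

HB.instance Definition _ :=
  GRing.isZmodule.Build submod_car sm_addA sm_addC sm_add0 sm_addN.

Let sm_scaleA a b v : sm_scale a (sm_scale b v) = sm_scale (a * b) v.
Proof. by apply: sm_eq; rewrite /= scalerA. Qed.
Let sm_scale1 : left_id 1 sm_scale.
Proof. by move=> v; apply: sm_eq; rewrite /= scale1r. Qed.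
Let sm_scaleDr : right_distributive sm_scale +%R.
Proof. by move=> a u v; apply: sm_eq; rewrite /= scalerDr. Qed.
Let sm_scaleDl v : {morph sm_scale^~ v: a b / a + b}.
Proof. by move=> a b; apply: sm_eq; rewrite /= scalerDl. Qed.

HB.instance Definition _ :=
  GRing.Zmodule_isLmodule.Build R submod_car sm_scaleA sm_scale1 sm_scaleDr sm_scaleDl.

Definition submodType : lmodType R := submod_car.

End SubModule.
Arguments submodType {R X S} HS.


Section Preradicals.
Variable R : pzRingType.

Definition family := forall X : lmodType R, subset_of X.

Definition is_preradical (r : family) :=
  (forall X : lmodType R, is_submod (r X)) /\
  (forall (X Y : lmodType R) (f : {linear X -> Y}) (x : X), r X x -> r Y (f x)).

Record preradical := Preradical {
  pr_fun :> family;
  pr_prop : is_preradical pr_fun }.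

Lemma pr_submod (r : preradical) (X : lmodType R) : is_submod (pr_fun r X).
Proof. exact (proj1 (pr_prop r) X). Qed.

Definition pr_le (r s : family) := forall X : lmodType R, incl (r X) (s X).

(* (r . s)(X) = r(s(X)), seen as a submodule of X *)
Definition pr_prod (r s : preradical) : family :=
  fun X x => exists y : submodType (pr_submod s X),
    pr_fun r (submodType (pr_submod s X)) y /\ proj1_sig y = x.

Definition pr_one : family := fun X _ => True.

Definition prime_preradical (r : family) :=
  [/\ is_preradical r,
      ~ (forall X : lmodType R, r X = pr_one X) &
      forall s t : preradical, pr_le (pr_prod s t) r -> pr_le (pr_fun s) r \/ pr_le (pr_fun t) r].

Definition etaMP (M : lmodType R) (P : subset_of M) : family :=
  fun L x => forall f : {linear L -> M}, P (f x).

Definition fully_invariant (M : lmodType R) (N : subset_of M) :=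
  is_submod N /\ forall (f : {linear M -> M}) x, N x -> N (f x).

(* submodule generated by a subset (sums of submodules are the submodule
   generated by their union) *)
Definition gen_submod (M : lmodType R) (A : subset_of M) : subset_of M :=
  fun x => forall T : subset_of M, is_submod T -> incl A T -> T x.

(* N_M L = sum { f(N) | f in Hom_R(M, L) } *)
Definition NML (M : lmodType R) (N L : subset_of M) (HL : is_submod L) : subset_of M :=
  gen_submod M (fun x => exists (f : {linear M -> submodType HL}) (n : M),
                 N n /\ proj1_sig (f n) = x).

Definition in_Spec_fi (M : lmodType R) (Q : subset_of M) :=
  [/\ fully_invariant M Q, Q <> pr_one M &
      forall (N L : subset_of M) (HN : fully_invariant M N) (HL : fully_invariant M L),
        incl (NML M N L (proj1 HL)) Q -> incl N Q \/ incl L Q].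

End Preradicals.
Arguments pr_fun {R} p X.
Arguments is_preradical {R} r.
Arguments pr_submod {R} r X.
Arguments pr_le {R} r s.
Arguments pr_prod {R} r s X x.
Arguments prime_preradical {R} r.
Arguments fully_invariant {R M} N.
Arguments gen_submod {R M} A x.
Arguments NML {R M} N L HL x.
Arguments in_Spec_fi {R M} Q.
Arguments etaMP {R M} P X.
Arguments pr_one {R} X.

From Pilot Require Import Defs.
From HB Require Import structures.
From mathcomp Require Import all_boot all_algebra.
From mathcomp Require Import boolp.
Import GRing.Theory.
Local Open Scope ring_scope.

(* The key preradical is alpha^M_N(X) = sum of f(N) over f : M -> X, the least
   preradical r with N <= r(M). For fully invariant N and L, a map M -> alpha^M_L(X)
   followed by any X -> M lands in L, so N_M L <= eta^M_P(M) forces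
   alpha^M_N . alpha^M_L <= eta^M_P. Primeness then puts N or L inside
   eta^M_P(M), because N <= alpha^M_N(M). Maximality holds because a fully
   invariant Q <= P is mapped into P by every endomorphism of M. *)

Section SubmoduleMaps.
Variables (R : pzRingType) (X : lmodType R) (S : subset_of X) (HS : is_submod S).

Definition submod_incl (u : submodType HS) : X := proj1_sig u.

Lemma submod_incl_linear : linear submod_incl.
Proof. by []. Qed.

HB.instance Definition _ :=
  GRing.isLinear.Build R (submodType HS) X *:%R submod_incl submod_incl_linear.

Lemma submod_incl_inj (u v : submodType HS) : submod_incl u = submod_incl v -> u = v.
Proof. by case: u v => [u Su] [v Sv] /= Euv; subst v; rewrite (Prop_irrelevance Su Sv). Qed.

Variables (Y : lmodType R) (f : {linear Y -> X}) (Sf : forall y, S (f y)).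

Definition corestr (y : Y) : submodType HS := exist _ (f y) (Sf y).

Lemma corestr_linear : linear corestr.
Proof. by move=> a u v; apply: submod_incl_inj; rewrite /= linearP. Qed.

HB.instance Definition _ :=
  GRing.isLinear.Build R Y (submodType HS) *:%R corestr corestr_linear.

End SubmoduleMaps.
Arguments submod_incl {R X S} HS.
Arguments corestr {R X S} HS {Y} f Sf.

Section GeneratedSubmodule.
Variable R : pzRingType.
Implicit Types X Y : lmodType R.

Lemma gen_submodP X (A : subset_of X) : is_submod (gen_submod A).
Proof.
split; first by move=> T [].
- by move=> x y Ax Ay T /[dup] HT [_ TD _] AT; apply: TD; [apply: Ax | apply: Ay].
- by move=> a x Ax T /[dup] HT [_ _ TZ] AT; apply: TZ; apply: Ax.
Qed.

Lemma gen_submod_in X (A : subset_of X) : incl A (gen_submod A).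
Proof. by move=> x Ax T _; apply. Qed.

Lemma preim_submod X Y (f : {linear X -> Y}) (T : subset_of Y) :
  is_submod T -> is_submod (fun x => T (f x)).
Proof.
case=> T0 TD TZ; split; first by rewrite linear0.
- by move=> x y Tx Ty; rewrite linearD; apply: TD.
- by move=> a x Tx; rewrite linearZ; apply: TZ.
Qed.

Lemma gen_submod_map X Y (A : subset_of X) (T : subset_of Y) (f : {linear X -> Y}) :
  is_submod T -> (forall x, A x -> T (f x)) -> forall x, gen_submod A x -> T (f x).
Proof. by move=> HT fA x Ax; apply: (Ax (fun x => T (f x))); [exact: preim_submod | exact: fA]. Qed.

End GeneratedSubmodule.

Section Alpha.
Variables (R : pzRingType) (M : lmodType R).

Definition alphaMN (N : subset_of M) : Defs.family R :=
  fun X => gen_submod (fun x => exists (g : {linear M -> X}) n, N n /\ g n = x).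

Lemma alphaMN_preradical (N : subset_of M) : is_preradical (alphaMN N).
Proof.
split=> [X | X Y f x]; first exact: gen_submodP.
apply: gen_submod_map; first exact: gen_submodP.
by move=> _ [g [n [Nn <-]]]; apply: gen_submod_in; exists (f \o g), n.
Qed.

Definition alphaP (N : subset_of M) : preradical R := @Preradical R _ (alphaMN_preradical N).

Lemma alphaMN_self (N : subset_of M) : incl N (alphaMN N M).
Proof. by move=> x Nx; apply: gen_submod_in; exists idfun, x. Qed.

Lemma alphaMN_map_fully_invariant (L : subset_of M) (X : lmodType R) (h : {linear X -> M}) :
  fully_invariant L -> forall x, alphaMN L X x -> L (h x).
Proof.
move=> [HL FL]; apply: gen_submod_map => // _ [g [l [Ll <-]]].
exact: (FL (h \o g)).
Qed.

End Alpha.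
Arguments alphaMN {R M} N X x.
Arguments alphaP {R M} N.
Arguments alphaMN_self {R M N} x.
Arguments alphaMN_map_fully_invariant {R M L X} h.

Section Eta.
Variables (R : pzRingType) (M : lmodType R) (P : subset_of M).

Lemma etaMP_incl : incl (etaMP P M) P.
Proof. by move=> x Px; apply: (Px idfun). Qed.

Lemma preradical_fully_invariant (r : Defs.family R) :
  is_preradical r -> fully_invariant (r M).
Proof. by case=> Hsub Hmap; split; [apply: Hsub | move=> f; apply: Hmap]. Qed.

Lemma fully_invariant_incl_etaMP (Q : subset_of M) :
  fully_invariant Q -> incl Q P -> incl Q (etaMP P M).
Proof. by move=> [_ FQ] QP x Qx f; apply: QP; apply: FQ. Qed.

Lemma alphaMN_prod_le_etaMP (N L : subset_of M) (HL : fully_invariant L) :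
  is_preradical (etaMP P) -> incl (NML N L (proj1 HL)) (etaMP P M) ->
  pr_le (pr_prod (alphaP N) (alphaP L)) (etaMP P).
Proof.
move=> [Hsub _] NL_eta X _ [y [Ny <-]].
set HX := pr_submod (alphaP L) X.
apply: (@gen_submod_map _ _ _ _ _ (submod_incl HX)) Ny; first exact: Hsub.
move=> _ [g [n [Nn <-]]] h.
have hgL m : L ((h \o submod_incl HX \o g) m).
  exact: alphaMN_map_fully_invariant HL _ (proj2_sig (g m)).
apply: etaMP_incl; apply: NL_eta; apply: gen_submod_in.
by exists (corestr (proj1 HL) _ hgL), n.
Qed.

End Eta.
Arguments alphaMN_prod_le_etaMP {R M P N L} HL.

Theorem proposition4p9 (R : pzRingType) (M : lmodType R) (P : subset_of M) :
  is_submod P ->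
  prime_preradical (etaMP P) ->
  etaMP P M <> pr_one M ->
  [/\ in_Spec_fi (etaMP P M),
      incl (etaMP P M) P &
      forall Q : subset_of M, in_Spec_fi Q -> incl Q P -> incl Q (etaMP P M)].
Proof.
move=> _ [eta_pr _ eta_prime] eta_proper.
split=> [| | Q [FQ _ _]]; last 2 first.
- exact: etaMP_incl.
- exact: fully_invariant_incl_etaMP.
split=> [||N L _ HL NL_eta].
- exact: preradical_fully_invariant.
- exact: eta_proper.
- have [alphaN_le | alphaL_le] :=
    eta_prime _ _ (alphaMN_prod_le_etaMP HL eta_pr NL_eta).
  + by left=> x /alphaMN_self; apply: alphaN_le.
  + by right=> x /alphaMN_self; apply: alphaL_le.
Qed.
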